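(* Assume $\gamma\neq\pm2$, $p_1,\dots,p_N>0$ and $q_1,\dots,q_N$ pairwise distinct. For each integer $m\ge1$ let $\tau_m(z)=\mathrm{tr}\big(\mathcal L(z)^m\big)$. Then there is a polynomial $P_m(X)$ of degree $m$ in one variable $X$, whose coefficients are functions of $(p,q)$ and which has no constant term, such that $\tau_m(z)=P_m(\Lambda(z))$ for all $z\neq-\gamma/2$. The coefficient of $X$ in $P_m$ is $$\mathfrak h^{(m)}=m\,\mathrm{tr}\Big(\big(T+\tfrac{\gamma}{2}A\big)\,(S+A)^{m-1}\Big).$$ Moreover $\tau_m(z)$ is a homogeneous symmetric function of $p_1,\dots,p_N$ of degree $m$.
   Context: Fix $N\ge2$, $\nu\neq0$ and a constant $\gamma$. The variables are $p_1,\dots,p_N$ and $q_1,\dots,q_N$. Write $q_{ij}=q_i-q_j$ and $\mathfrak s_{ij}=\mathrm{sgn}(q_i-q_j)$, with the convention $\mathfrak s_{ii}=0$. $E_{ij}$ denotes the elementary $N\times N$ matrix. Define the $N\times N$ matrices $A=\sum_{i,j}\sqrt{p_ip_j}\,\sinh\frac{\nu}{2}(q_i-q_j)\,E_{ij}$, $T=\sum_{i,j}\sqrt{p_ip_j}\,\cosh\frac{\nu}{2}(q_i-q_j)\,E_{ij}$ and $S=\sum_{i,j}\sqrt{p_ip_j}\,\mathfrak s_{ij}\sinh\frac{\nu}{2}(q_i-q_j)\,E_{ij}$. Let $\sigma(z)=z^\sigma=-\frac{\frac{\gamma}{2}z+1}{z+\frac{\gamma}{2}}$, $\Lambda(z)=\frac{z+z^\sigma}{2}=\frac{z^2-1}{2z+\gamma}$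 and $\xi(z)=\frac{z-z^\sigma}{2}=\frac{z^2+\gamma z+1}{2z+\gamma}$. The Lax matrix is $\mathcal L(z)=\Lambda(z)\,T+S+\xi(z)\,A$; equivalently $\mathcal L(z)=z\,T^h+z^\sigma (T^h)^t+S$ with $T^h=\frac12\sum_{i,j}\sqrt{p_ip_j}\,e^{\frac{\nu}{2}(q_i-q_j)}E_{ij}$. *)

From HB Require Import structures.
From mathcomp Require Import all_boot all_order all_algebra.
From mathcomp Require Import all_classical all_reals.
From mathcomp Require Import sequences exp.
Set Implicit Arguments. Unset Strict Implicit. Unset Printing Implicit Defensive.
Import Order.TTheory GRing.Theory Num.Theory.
Local Open Scope ring_scope.

Section Lax.
Variable R : realType.

Definition sinhR (x : R) : R := (expR x - expR (- x)) / 2.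
Definition coshR (x : R) : R := (expR x + expR (- x)) / 2.

Variables (N : nat) (nu gamma : R) (p q : 'I_N -> R).

Definition Amat : 'M[R]_N :=
  \matrix_(i, j) (Num.sqrt (p i * p j) * sinhR (nu / 2 * (q i - q j))).
Definition Tmat : 'M[R]_N :=
  \matrix_(i, j) (Num.sqrt (p i * p j) * coshR (nu / 2 * (q i - q j))).
Definition Smat : 'M[R]_N :=
  \matrix_(i, j) (Num.sqrt (p i * p j) * Num.sg (q i - q j)
                  * sinhR (nu / 2 * (q i - q j))).

Definition Lambda (z : R) : R := (z ^+ 2 - 1) / (2 * z + gamma).
Definition xi (z : R) : R := (z ^+ 2 + gamma * z + 1) / (2 * z + gamma).

Definition Lax (z : R) : 'M[R]_N :=
  Lambda z *: Tmat + Smat + xi z *: Amat.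

Definition tau (m : nat) (z : R) : R := \tr (Lax z ^+ m).

Definition hcoef (m : nat) : R :=
  m%:R * \tr ((Tmat + (gamma / 2) *: Amat) *m (Smat + Amat) ^+ m.-1).

End Lax.

From HB Require Import structures.
From mathcomp Require Import all_boot all_order all_algebra all_fingroup.
From mathcomp Require Import all_classical all_reals.
From mathcomp Require Import sequences exp.
From mathcomp Require Import ring lra.
Import Order.TTheory GRing.Theory Num.Theory.
Set Implicit Arguments. Unset Strict Implicit. Unset Printing Implicit Defensive.
Local Open Scope ring_scope.

(* Since xi(z)^2 = Lambda(z)^2 + gamma Lambda(z) + 1, the Lax matrix is U + y A
   with U = S + X T, evaluated at X = Lambda(z), and y^2 = X^2 + gamma X + 1.
   Expanding (U + y A)^m = C_m + y D_m with y^2 eliminated makes C_m and D_m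
   polynomial matrices in X; as U is symmetric and A skew, D_m is skew, so
   tau_m = (tr C_m)(Lambda) and P_m := tr C_m.  Modulo X^2, y^2 agrees with
   (1 + gamma X / 2)^2, so the coefficients of degree 0 and 1 of P_m are those
   of tr ((S + A) + X (T + gamma A / 2))^m: tr (S + A)^m = 0, as S + A is
   strictly triangular for the order of the q_i, and h^(m).  The coefficient of
   degree m is tr (T + A)^m = (sum p_i)^m, T + A having rank one.  Homogeneity
   and symmetry hold because L is linear in p and permuting (p, q) conjugates L
   by a permutation matrix. *)

Section ExtPow.
Variables (K : comPzRingType) (n : nat) (U A : 'M[K]_n) (c : K).

(* A pair (C, D) stands for C + y D in the matrix algebra over K[y]/(y^2 - c);
   ext_mulr and ext_mull are right and left multiplication by U + y A. *)
Definition ext_mulr (X : 'M[K]_n * 'M[K]_n) :=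
  (X.1 *m U + c *: (X.2 *m A), X.1 *m A + X.2 *m U).
Definition ext_mull (X : 'M[K]_n * 'M[K]_n) :=
  (U *m X.1 + c *: (A *m X.2), A *m X.1 + U *m X.2).
Fixpoint ext_pow k := if k is k'.+1 then ext_mulr (ext_pow k') else (1%:M, 0).

Lemma ext_mulrl X : ext_mulr (ext_mull X) = ext_mull (ext_mulr X).
Proof.
case: X => C D; rewrite /ext_mulr /ext_mull /=; congr pair.
  rewrite !mulmxDl !mulmxDr -!scalemxAl -!scalemxAr !mulmxA !scalerDr.
  by rewrite -!addrA; congr (_ + _); rewrite addrC (addrC (c *: _)) -addrA.
rewrite !mulmxDl !mulmxDr -!scalemxAl -!scalemxAr !mulmxA.
by rewrite addrACA [in RHS]addrACA (addrC (U *m C *m A)).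
Qed.

Lemma ext_powSl k : ext_pow k.+1 = ext_mull (ext_pow k).
Proof.
elim: k => [|k IHk].
  by rewrite /= /ext_mulr /ext_mull /= !mul1mx !mulmx1 !mul0mx !mulmx0 !scaler0.
by rewrite -[ext_pow k.+2]/(ext_mulr (ext_pow k.+1)) {1}IHk ext_mulrl.
Qed.

Lemma ext_pow_sqrt y k : y ^+ 2 = c ->
  (ext_pow k).1 + y *: (ext_pow k).2 = (U + y *: A) ^+ k.
Proof.
move=> y2c; elim: k => [|k IHk]; first by rewrite /= scaler0 addr0 expr0.
rewrite exprSr -IHk -mulmxE /= mulmxDl !mulmxDr.
rewrite -!scalemxAl -!scalemxAr scalerA -expr2 y2c scalerDr.
by rewrite addrACA (addrC (c *: _)).
Qed.

Hypotheses (U_sym : U^T = U) (A_skew : A^T = - A).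

Lemma ext_pow_trmx k :
  (ext_pow k).1^T = (ext_pow k).1 /\ (ext_pow k).2^T = - (ext_pow k).2.
Proof.
elim: k => [|k [IH1 IH2]]; first by rewrite /= trmx1 trmx0 oppr0.
(* transposition turns right multiplication into left multiplication *)
split; rewrite [in LHS]/= [in RHS]ext_powSl /ext_mulr /ext_mull /=;
  rewrite !linearD ?linearZ /= !trmx_mul U_sym A_skew IH1 IH2;
  by rewrite ?mulmxN ?mulNmx ?opprK ?opprD.
Qed.

Lemma mxtrace_ext_pow2 k : \tr (ext_pow k).2 = - \tr (ext_pow k).2.
Proof. by rewrite -{1}mxtrace_tr (proj2 (ext_pow_trmx k)) raddfN. Qed.

End ExtPow.

Lemma map_ext_pow (K K' : comPzRingType) (f : {rmorphism K -> K'}) n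
    (U A : 'M[K]_n) c k :
  ext_pow (map_mx f U) (map_mx f A) (f c) k =
  (map_mx f (ext_pow U A c k).1, map_mx f (ext_pow U A c k).2).
Proof.
elim: k => [|k IHk]; first by rewrite /= map_mx1 map_mx0.
by rewrite /= IHk /ext_mulr /= !map_mxD !map_mxM map_mxZ !map_mxM.
Qed.

Section CoefMx.
Variables (R : comNzRingType) (n : nat).
Local Notation mc B := (map_mx (@polyC R) B).

Definition coefmx (l : nat) (M : 'M[{poly R}]_n) : 'M[R]_n :=
  \matrix_(i, j) (M i j)`_l.

Lemma coefmxD l M1 M2 : coefmx l (M1 + M2) = coefmx l M1 + coefmx l M2.
Proof. by apply/matrixP=> i j; rewrite !mxE coefD. Qed.

Lemma coefmx0 l : coefmx l 0 = 0.
Proof. by apply/matrixP=> i j; rewrite !mxE coef0. Qed.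

Lemma coefmx1 l : coefmx l 1%:M = if l == 0%N then 1%:M else 0.
Proof.
apply/matrixP=> i j; rewrite !mxE; case: l => [|l] /=; rewrite ?mxE;
  by case: (i == j); rewrite ?coef1 ?coef0.
Qed.

Lemma coefmxMC l M B : coefmx l (M *m mc B) = coefmx l M *m B.
Proof.
apply/matrixP=> i j; rewrite !mxE coef_sum; apply: eq_bigr => k _.
by rewrite !mxE mulrC coefCM mulrC.
Qed.

Lemma coefmxXZ l M : coefmx l ('X *: M) = if l is l'.+1 then coefmx l' M else 0.
Proof. by apply/matrixP=> i j; case: l => [|l]; rewrite !mxE coefXM. Qed.

Lemma coefmxCZ l a M : coefmx l (a%:P *: M) = a *: coefmx l M.
Proof. by apply/matrixP=> i j; rewrite !mxE coefCM. Qed.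

Lemma coefmx0Z Q M : coefmx 0 (Q *: M) = Q`_0 *: coefmx 0 M.
Proof. by apply/matrixP=> i j; rewrite !mxE coefM big_ord1. Qed.

Lemma coefmx1Z Q M :
  coefmx 1 (Q *: M) = Q`_0 *: coefmx 1 M + Q`_1 *: coefmx 0 M.
Proof. by apply/matrixP=> i j; rewrite !mxE coefM big_ord_recl big_ord1. Qed.

Lemma coef_mxtrace l (M : 'M[{poly R}]_n) : (\tr M)`_l = \tr (coefmx l M).
Proof. by rewrite /mxtrace coef_sum; apply: eq_bigr => i _; rewrite mxE. Qed.

Lemma coefmxM_linear l M B0 B1 :
  coefmx l (M *m (mc B0 + 'X *: mc B1)) =
  coefmx l M *m B0 + (if l is l'.+1 then coefmx l' M *m B1 else 0).
Proof.
rewrite mulmxDr -scalemxAr coefmxD coefmxMC coefmxXZ.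
by case: l => [|l] //; rewrite coefmxMC.
Qed.

Lemma coefmx0_linear_pow B0 B1 k :
  coefmx 0 ((mc B0 + 'X *: mc B1) ^+ k) = B0 ^+ k.
Proof.
elim: k => [|k IHk]; first by rewrite !expr0 coefmx1.
by rewrite !exprSr -!mulmxE coefmxM_linear IHk addr0.
Qed.

(* The extra factor X keeps the induction going; the theorem uses X = 1. *)
Lemma mxtrace_coefmx1_linear_pow B0 B1 k X : GRing.comm X B0 ->
  \tr (coefmx 1 ((mc B0 + 'X *: mc B1) ^+ k) *m X)
  = k%:R * \tr (B1 *m B0 ^+ k.-1 *m X).
Proof.
elim: k X => [|k IHk] X XB0; first by rewrite expr0 coefmx1 mul0mx mul0r mxtrace0.
rewrite exprSr -mulmxE coefmxM_linear coefmx0_linear_pow mulmxDl mxtraceD.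
rewrite -mulmxA IHk; last first.
  by apply/commr_sym/commrM; [exact: commr_refl | exact/commr_sym].
have -> : \tr (B0 ^+ k *m B1 *m X) = \tr (B1 *m B0 ^+ k *m X).
  by rewrite -mulmxA mxtrace_mulC -!mulmxA mulmxE (commrX k XB0).
case: k {IHk} => [|k]; first by rewrite mul0r add0r expr0 mul1r.
rewrite /= mulmxA -(mulmxA B1) -[B0 ^+ k *m B0]/(B0 ^+ k * B0) -exprSr.
by rewrite -[in RHS](addn1 k.+1) natrD mulrDl mul1r.
Qed.

End CoefMx.

Section XiSquare.
Variables (R : comNzRingType) (n : nat) (S T A : 'M[R]_n) (g : R).
Local Notation mc B := (map_mx (@polyC R) B).

(* xi(z)^2 is this polynomial evaluated at Lambda(z) *)
Definition xi2_poly : {poly R} := 'X * 'X + g%:P * 'X + 1.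

Local Notation E Q k := (ext_pow (mc S + 'X *: mc T) (mc A) Q k).

Lemma coefmx_xi2Z l (M : 'M[{poly R}]_n) : coefmx l (xi2_poly *: M) =
  (if l is l'.+2 then coefmx l' M else 0)
  + g *: (if l is l'.+1 then coefmx l' M else 0) + coefmx l M.
Proof.
rewrite /xi2_poly !scalerDl scale1r -!scalerA !coefmxD coefmxCZ !coefmxXZ.
by case: l => [|[|l]]; rewrite ?coefmxXZ ?scaler0.
Qed.

Lemma ext_pow_xi2_high k :
  [/\ forall l, (k < l)%N -> coefmx l (E xi2_poly k).1 = 0,
      forall l, (k <= l)%N -> coefmx l (E xi2_poly k).2 = 0 &
      coefmx k (E xi2_poly k).1 + coefmx k.-1 (E xi2_poly k).2 = (T + A) ^+ k].
Proof.
elim: k => [|k [IH1 IH2 IH3]].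
  by split=> [[|l] // _|l _|]; rewrite /= ?coefmx1 ?coefmx0 ?addr0 ?expr0.
rewrite [ext_pow _ _ _ k.+1]/=.
split=> [[|[|l]] // lt_kl|[|l] // le_kl|].
- rewrite coefmxD coefmxM_linear coefmx_xi2Z !coefmxMC.
  by rewrite !IH1 ?IH2 ?(ltnW lt_kl) // ?mul0mx ?scaler0 ?addr0 // ltnW // ltnW.
- rewrite coefmxD coefmxM_linear !coefmxMC.
  by rewrite !IH1 ?IH2 // ?mul0mx ?addr0 // ltnW.
rewrite /= !coefmxD !coefmxM_linear coefmx_xi2Z !coefmxMC.
rewrite (IH1 k.+1) // (IH2 k.+1) // (IH2 k) // !mul0mx add0r scaler0 !addr0.
case: k IH1 IH2 IH3 => [|k] _ _ IH3.
  by rewrite coefmx1 /= !mul1mx !addr0 expr1.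
rewrite coefmxMC add0r exprSr -mulmxE -IH3 mulmxDl !mulmxDr [LHS]addrACA.
by congr (_ + _); exact: addrC.
Qed.

Lemma ext_pow_low (Q1 Q2 : {poly R}) : Q1`_0 = Q2`_0 -> Q1`_1 = Q2`_1 -> forall k,
  [/\ coefmx 0 (E Q1 k).1 = coefmx 0 (E Q2 k).1,
      coefmx 1 (E Q1 k).1 = coefmx 1 (E Q2 k).1,
      coefmx 0 (E Q1 k).2 = coefmx 0 (E Q2 k).2 &
      coefmx 1 (E Q1 k).2 = coefmx 1 (E Q2 k).2].
Proof.
move=> Q12_0 Q12_1; elim=> [|k [e1 e2 e3 e4]] //=.
rewrite !coefmxD !coefmxM_linear coefmx0Z coefmx1Z coefmx0Z coefmx1Z !coefmxMC.
by rewrite e1 e2 e3 e4 Q12_0 Q12_1.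
Qed.

End XiSquare.

Lemma mxtrace_pow_strict (R : pzRingType) (d : Order.disp_t) (T : porderType d)
    n (f : 'I_n -> T) (M : 'M[R]_n) :
  (forall i j, M i j != 0 -> (f j < f i)%O) ->
  forall k, (0 < k)%N -> \tr (M ^+ k) = 0.
Proof.
move=> M_lt; have pow_lt k i j : (M ^+ k.+1) i j != 0 -> (f j < f i)%O.
  elim: k i j => [|k IHk] i j; first by rewrite expr1; exact: M_lt.
  move=> nz; apply: contraNT nz => not_lt; apply/eqP.
  rewrite exprSr -mulmxE mxE big1 // => l _.
  have [->|/IHk lt_li] := eqVneq ((M ^+ k.+1) i l) 0; first by rewrite mul0r.
  have [->|/M_lt lt_jl] := eqVneq (M l j) 0; first by rewrite mulr0.
  by move: not_lt; rewrite (lt_trans lt_jl lt_li).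
case=> // k _; rewrite /mxtrace big1 // => i _.
by apply/eqP; apply: contraT => /pow_lt; rewrite ltxx.
Qed.

Lemma mxtrace_pow_rank1 (R : comPzRingType) n (u : 'cV[R]_n) (v : 'rV[R]_n) k :
  \tr ((u *m v) ^+ k.+1) = ((v *m u) 0 0) ^+ k.+1.
Proof.
set a := (v *m u) 0 0.
have -> : (u *m v) ^+ k.+1 = a ^+ k *: (u *m v).
  elim: k => [|k IHk]; first by rewrite expr1 expr0 scale1r.
  rewrite exprSr IHk -mulmxE -scalemxAl -mulmxA (mulmxA v).
  rewrite [v *m u]mx11_scalar -/a.
  by rewrite mul_scalar_mx -scalemxAr scalerA -exprSr.
by rewrite mxtraceZ mxtrace_mulC trace_mx11 -/a -exprSr.
Qed.

Lemma scalemx_pow (R : comPzRingType) n (t : R) (M : 'M[R]_n) k :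
  (t *: M) ^+ k = t ^+ k *: M ^+ k.
Proof.
elim: k => [|k IHk]; first by rewrite !expr0 scale1r.
by rewrite !exprSr IHk -!mulmxE -scalemxAl -scalemxAr scalerA.
Qed.

Lemma mxtrace_pow_perm (R : pzRingType) n (M : 'M[R]_n) (s : {perm 'I_n}) k :
  \tr ((\matrix_(i, j) M (s i) (s j)) ^+ k) = \tr (M ^+ k).
Proof.
have -> : (\matrix_(i, j) M (s i) (s j)) ^+ k
          = \matrix_(i, j) (M ^+ k) (s i) (s j).
  elim: k => [|k IHk].
    by apply/matrixP=> i j; rewrite !expr0 !mxE (inj_eq perm_inj).
  apply/matrixP=> i j; rewrite !exprSr -!mulmxE IHk !mxE.
  rewrite [in RHS](reindex_inj (@perm_inj _ s)) /=.
  by apply: eq_bigr => l _; rewrite !mxE.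
rewrite /mxtrace [in RHS](reindex_inj (@perm_inj _ s)) /=.
by apply: eq_bigr => l _; rewrite !mxE.
Qed.

Section LaxMatrices.
Variables (R : realType) (N : nat) (nu : R) (p q : 'I_N -> R).
Local Notation T := (Tmat nu p q).
Local Notation S := (Smat nu p q).
Local Notation A := (Amat nu p q).

Lemma coshRN (x : R) : coshR (- x) = coshR x.
Proof. by rewrite /coshR opprK addrC. Qed.

Lemma sinhRN (x : R) : sinhR (- x) = - sinhR x.
Proof. by rewrite /sinhR opprK -mulNr opprB. Qed.

Lemma sinhR0 : sinhR (0 : R) = 0.
Proof. by rewrite /sinhR oppr0 subrr mul0r. Qed.

Lemma coshR_add_sinhR (x : R) : coshR x + sinhR x = expR x.
Proof. rewrite /coshR /sinhR; lra. Qed.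

Let argN i j : nu / 2 * (q j - q i) = - (nu / 2 * (q i - q j)).
Proof. by rewrite -mulrN opprB. Qed.

Lemma Tmat_sym : T^T = T.
Proof. by apply/matrixP=> i j; rewrite !mxE argN coshRN (mulrC (p j)). Qed.

Lemma Smat_sym : S^T = S.
Proof.
apply/matrixP=> i j; rewrite !mxE argN sinhRN -(opprB (q i)) sgrN.
by rewrite (mulrC (p j)) !mulrN !mulNr opprK.
Qed.

Lemma Amat_skew : A^T = - A.
Proof. by apply/matrixP=> i j; rewrite !mxE argN sinhRN mulrN (mulrC (p j)). Qed.

(* The signs cancel when q_i < q_j, and sinh 0 = 0 when q_i = q_j. *)
Lemma SA_neq0_lt i j : (S + A) i j != 0 -> q j < q i.
Proof.
rewrite !mxE; apply: contraNT; rewrite -leNgt le_eqVlt => /orP[/eqP->|lt_ij].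
  by rewrite subrr mulr0 sinhR0 !mulr0 addr0.
by apply/eqP; rewrite ltr0_sg ?subr_lt0 // mulrN1 mulNr addNr.
Qed.

Lemma mxtrace_SA_pow m : (0 < m)%N -> \tr ((S + A) ^+ m) = 0.
Proof. exact: mxtrace_pow_strict SA_neq0_lt m. Qed.

Hypothesis p_gt0 : forall i, 0 < p i.

(* T + A = u v, u_i = sqrt(p_i) e^(nu q_i / 2), v_j = sqrt(p_j) e^(-nu q_j / 2) *)
Lemma mxtrace_TA_pow m : (0 < m)%N -> \tr ((T + A) ^+ m) = (\sum_i p i) ^+ m.
Proof.
pose u : 'cV[R]_N := \col_i (Num.sqrt (p i) * expR (nu / 2 * q i)).
pose v : 'rV[R]_N := \row_j (Num.sqrt (p j) * expR (- (nu / 2 * q j))).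
have -> : T + A = u *m v.
  apply/matrixP=> i j; rewrite !mxE big_ord1 !mxE -mulrDr coshR_add_sinhR.
  rewrite sqrtrM ?(ltW (p_gt0 i)) // mulrBr expRD; lra.
case: m => // m _; rewrite mxtrace_pow_rank1; congr (_ ^+ _).
rewrite !mxE; apply: eq_bigr => l _; rewrite !mxE mulrACA -expr2.
by rewrite sqr_sqrtr ?(ltW (p_gt0 l)) // -expRD addNr expR0 mulr1.
Qed.

End LaxMatrices.

Section TauPoly.
Variables (R : realType) (N : nat) (nu gamma : R) (p q : 'I_N -> R).
Local Notation mc B := (map_mx (@polyC R) B).
Local Notation T := (Tmat nu p q).
Local Notation S := (Smat nu p q).
Local Notation A := (Amat nu p q).
Local Notation U := (mc S + 'X *: mc T).

Definition tau_poly m : {poly R} := \tr (ext_pow U (mc A) (xi2_poly gamma) m).1.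

Lemma mxtrace_ext_pow2_eq0 Q k : \tr (ext_pow U (mc A) Q k).2 = 0.
Proof.
have U_sym : U^T = U by rewrite linearD linearZ /= !map_trmx Tmat_sym Smat_sym.
have A_skew : (mc A)^T = - mc A by rewrite map_trmx Amat_skew map_mxN.
apply/polyP=> l.
have /eqP := congr1 (coefp l) (mxtrace_ext_pow2 Q U_sym A_skew k).
by rewrite /= coefN coef0 eq_sym eqNr => /eqP.
Qed.

Lemma xi_sqr z : 2 * z + gamma != 0 ->
  xi gamma z ^+ 2 = (xi2_poly gamma).[Lambda gamma z].
Proof.
move=> nz; rewrite /xi2_poly !(hornerD, hornerM, hornerX, hornerC) /xi /Lambda.
by field.
Qed.

Lemma tau_polyE m z : z != - (gamma / 2) ->
  tau nu gamma p q m z = (tau_poly m).[Lambda gamma z].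
Proof.
move=> z_neq; set L := Lambda gamma z; set y := xi gamma z.
have nz : 2 * z + gamma != 0 by apply: contra z_neq => /eqP ?; apply/eqP; lra.
have evU : map_mx (horner_eval L) U = S + L *: T.
  by apply/matrixP=> i j; rewrite !mxE horner_evalE !hornerE mulrC.
have evA : map_mx (horner_eval L) (mc A) = A.
  by apply/matrixP=> i j; rewrite !mxE horner_evalE hornerC.
have evQ : horner_eval L (xi2_poly gamma) = y ^+ 2 by rewrite horner_evalE xi_sqr.
have := map_ext_pow (horner_eval L) U (mc A) (xi2_poly gamma) m.
rewrite evU evA; set c := (X in ext_pow _ _ X) => ev.
rewrite (_ : c = y ^+ 2) in ev; last exact: evQ.
have := ext_pow_sqrt (S + L *: T) A m (erefl (y ^+ 2)); rewrite ev /= => sq.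
rewrite /tau /Lax -/L -/y (addrC (L *: T)) -sq mxtraceD mxtraceZ !trace_map_mx.
by rewrite mxtrace_ext_pow2_eq0 rmorph0 mulr0 addr0.
Qed.

(* To first order in X, xi2_poly gamma is the square of xi1_poly. *)
Definition xi1_poly : {poly R} := 1 + (gamma / 2)%:P * 'X.

Lemma xi2_poly_low :
  (xi2_poly gamma)`_0 = (xi1_poly ^+ 2)`_0 /\
  (xi2_poly gamma)`_1 = (xi1_poly ^+ 2)`_1.
Proof.
rewrite /xi2_poly /xi1_poly expr2 !coefD !coefXM /= !coefCM !coefX !coef1 /=.
rewrite !coefM !big_ord_recl !big_ord0 /= !coefD !coefCM !coefX !coef1 /=.
split; lra.
Qed.

Lemma mxtrace_ext_pow_xi1 m :
  \tr (ext_pow U (mc A) (xi1_poly ^+ 2) m).1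
  = \tr ((mc (S + A) + 'X *: mc (T + (gamma / 2) *: A)) ^+ m).
Proof.
have -> : mc (S + A) + 'X *: mc (T + (gamma / 2) *: A) = U + xi1_poly *: mc A.
  by apply/matrixP=> i j; rewrite !mxE /xi1_poly !polyCD !polyCM; ring.
rewrite -(ext_pow_sqrt _ _ _ (erefl (xi1_poly ^+ 2))) mxtraceD mxtraceZ.
by rewrite mxtrace_ext_pow2_eq0 mulr0 addr0.
Qed.

Lemma tau_poly_coef0 m : (0 < m)%N -> (tau_poly m)`_0 = 0.
Proof.
move=> m_gt0; have [low0 low1] := xi2_poly_low.
have [e0 _ _ _] := ext_pow_low S T A low0 low1 m.
rewrite coef_mxtrace e0 -coef_mxtrace mxtrace_ext_pow_xi1 coef_mxtrace.
by rewrite coefmx0_linear_pow mxtrace_SA_pow.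
Qed.

Lemma tau_poly_coef1 m : (0 < m)%N -> (tau_poly m)`_1 = hcoef nu gamma p q m.
Proof.
move=> m_gt0; have [low0 low1] := xi2_poly_low.
have [_ e1 _ _] := ext_pow_low S T A low0 low1 m.
rewrite coef_mxtrace e1 -coef_mxtrace mxtrace_ext_pow_xi1 coef_mxtrace.
rewrite -[coefmx 1 _]mulmx1 mxtrace_coefmx1_linear_pow ?mulmx1 //.
exact/commr_sym/commr1.
Qed.

Hypothesis p_gt0 : forall i, 0 < p i.
Hypothesis N_gt0 : (0 < N)%N.

Lemma size_tau_poly m : (0 < m)%N -> size (tau_poly m) = m.+1.
Proof.
move=> m_gt0; have [high1 _ top] := ext_pow_xi2_high S T A gamma m.
apply/eqP; rewrite eqn_leq; apply/andP; split.
  by apply/leq_sizeP => l lt_ml; rewrite coef_mxtrace high1 ?mxtrace0.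
rewrite ltnNge; apply/negP => /leq_sizeP /(_ m (leqnn m)).
rewrite coef_mxtrace (canRL (addrK _) top) mxtraceD raddfN /= -coef_mxtrace.
rewrite mxtrace_ext_pow2_eq0 coef0 oppr0 addr0 mxtrace_TA_pow //; apply/eqP.
rewrite expf_neq0 // gt_eqF // (bigD1 (Ordinal N_gt0)) //=.
by rewrite ltr_pwDl ?sumr_ge0 // => i _; exact: ltW.
Qed.

End TauPoly.

Lemma Lax_scale (R : realType) N (nu gamma : R) (p q : 'I_N -> R) (t z : R) :
  0 < t -> Lax nu gamma (fun i => t * p i) q z = t *: Lax nu gamma p q z.
Proof.
move=> t_gt0.
have sqrt_scale (a b : R) :
    Num.sqrt (t * a * (t * b)) = t * Num.sqrt (a * b).
  by rewrite mulrACA -expr2 sqrtrM ?sqr_ge0 // sqrtr_sqr gtr0_norm.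
rewrite /Lax.
have [-> -> ->] : [/\ Tmat nu (fun i => t * p i) q = t *: Tmat nu p q,
    Smat nu (fun i => t * p i) q = t *: Smat nu p q &
    Amat nu (fun i => t * p i) q = t *: Amat nu p q].
  by split; apply/matrixP=> i j; rewrite !mxE sqrt_scale !mulrA.
by rewrite !scalerDr !scalerA (mulrC t (Lambda _ _)) (mulrC t (xi _ _)).
Qed.

Unset Implicit Arguments.

Theorem mainTheorem1 (R : realType) (N : nat) (nu gamma : R)
    (p q : 'I_N -> R) (m : nat) :
  (2 <= N)%N -> nu != 0 -> gamma != 2 -> gamma != -2 ->
  (forall i, 0 < p i) -> injective q -> (1 <= m)%N ->
  [/\ exists P : {poly R},
        [/\ size P = m.+1, P`_0 = 0, P`_1 = hcoef nu gamma p q m &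
            forall z : R, z != - (gamma / 2) ->
              tau nu gamma p q m z = P.[Lambda gamma z]],
      (forall (t : R) (z : R), 0 < t -> z != - (gamma / 2) ->
         tau nu gamma (fun i => t * p i) q m z
         = t ^+ m * tau nu gamma p q m z) &
      (forall (s : {perm 'I_N}) (z : R), z != - (gamma / 2) ->
         tau nu gamma (fun i => p (s i)) (fun i => q (s i)) m z
         = tau nu gamma p q m z)].
Proof.
move=> N_ge2 _ _ _ p_gt0 _ m_gt0; split.
- exists (tau_poly nu gamma p q m); split.
  + by apply: size_tau_poly => //; exact: ltnW.
  + exact: tau_poly_coef0.
  + exact: tau_poly_coef1.
  + exact: tau_polyE.
- by move=> t z t_gt0 _; rewrite /tau Lax_scale // scalemx_pow mxtraceZ.
- move=> s z _; rewrite /tau -[RHS](mxtrace_pow_perm _ s); congr (\tr (_ ^+ m)).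
  by apply/matrixP=> i j; rewrite !mxE.
Qed.
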